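(* Let $\mathcal{P}$ be a discrete minimization problem with $n$ variables and let $\mathcal{M}$ be a relaxed multivalued decision diagram for $\mathcal{P}$, i.e. $Sol(\mathcal{P}) \subseteq Sol(\mathcal{M})$. Let $u$ be an exact node of $\mathcal{M}$, and let $(\underline{u}, \mathcal{M}^* )$ be the output of the peel operation applied to $(\mathcal{M},u)$, where the filter step removes an arc only if no feasible solution of $\mathcal{P}$ corresponds to a path using that arc. Then $$Sol(\mathcal{P}) \subseteq Sol(\mathcal{M}^* ) \cup Sol(\underline{u}).$$
   Context: A multivalued decision diagram (MDD) $\mathcal{M}$ for a problem with variables $x_1,\dots,x_n$ is a directed acyclic graph whose nodes are partitioned into layers $L_1,\dots,L_{n+1}$; $L_1=\{r\}$ (root, no in-arcs), $L_{n+1}=\{t\}$ (terminal, no out-arcs). Every arc goes from a node on layer $i$ to a node on layer $i+1$ and carries a label $l\in D(x_i)$ (meaning $x_i=l$) and a value. $Sol(\mathcal{M})$ is the set of label sequences of $r$–$t$ paths; $Sol(\mathcal{P})$ is the set of feasible assignments. For a node $v$, $All_v^\downarrow$ (resp. $Some_v^\downarrow$) is the set of labels appearing on every (resp. at least one) $r$–$v$ path. A node $v$ is exact if $Some_v^\downarrow=All_v^\downarrow$ and every arc ending at $v$ starts at an exact node. Peel operation on $(\mathcal{M},u)$, $u$ exact: create a new diagram $\underline{u}$; delete all in-arcs of $u$, remove $u$ from $\mathcal{M}$ and make it the root of $\underline{u}$ (its out-arcs still end in $\mathcal{M}$). While some arc starts in $\underline{u}$ and ends in $\mathcal{M}$: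 for each node $m$ of $\mathcal{M}$ having an in-arc originating in $\underline{u}$, create a new node $m'$ on the same layer in $\underline{u}$, redirect every in-arc of $m$ originating in $\underline{u}$ to $m'$, give $m'$ a copy (same label, value, head) of every out-arc of $m$, and apply the filter to the in-arcs of $m'$ and the out-arcs of $m$ and $m'$. Finally, repeatedly delete from $\mathcal{M}$ every node other than $r,t$ with no in-arcs or no out-arcs (with its arcs); the result is $\mathcal{M}^*$. The copy of $t$ in $\underline{u}$ is its terminal $t'$. $Sol(\underline{u})$ denotes the set of label sequences obtained by concatenating the label sequence of some $r$–$u$ path of the original diagram $\mathcal{M}$ with the label sequence of some $u$–$t'$ path of $\underline{u}$. *)

From mathcomp Require Import all_boot.
Set Implicit Arguments. Unset Strict Implicit. Unset Printing Implicit Defensive.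

Section MDD.

(* L : type of labels (values of the variables); W : type of arc values. *)
Variables (L W : eqType).

(* An arc: (tail, head, label, value). Nodes are natural numbers. *)
Definition arc := (nat * nat * L * W)%type.
Definition src (a : arc) : nat := a.1.1.1.
Definition dst (a : arc) : nat := a.1.1.2.
Definition lab (a : arc) : L := a.1.2.
Definition aval (a : arc) : W := a.2.
Definition set_src (a : arc) (v : nat) : arc := (v, dst a, lab a, aval a).
Definition set_dst (a : arc) (v : nat) : arc := (src a, v, lab a, aval a).

Fixpoint is_path (G : seq arc) (x y : nat) (p : seq arc) : bool :=
  match p with
  | [::] => x == y
  | a :: p' => [&& a \in G, src a == x & is_path G (dst a) y p']
  end.

Record mdd := MDD {
  mdd_nodes : seq nat;
  mdd_layer : nat -> nat;
  mdd_root : nat;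
  mdd_term : nat;
  mdd_arcs : seq arc }.

(* Well-formedness of an MDD for variables x_1..x_n with domains D i = D(x_i):
   layers L_1..L_{n+1}, L_1 = {r}, L_{n+1} = {t}, every arc from layer i to
   layer i+1 with a label in D(x_i). *)
Definition wf_mdd (n : nat) (D : nat -> pred L) (M : mdd) : Prop :=
  [/\ uniq (mdd_nodes M),
      mdd_root M \in mdd_nodes M, mdd_term M \in mdd_nodes M,
      mdd_layer M (mdd_root M) = 1 & mdd_layer M (mdd_term M) = n.+1] /\
  [/\ (forall v, v \in mdd_nodes M -> 1 <= mdd_layer M v <= n.+1),
      (forall v, v \in mdd_nodes M -> mdd_layer M v = 1 -> v = mdd_root M),
      (forall v, v \in mdd_nodes M -> mdd_layer M v = n.+1 -> v = mdd_term M) &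
      (forall a, a \in mdd_arcs M ->
         [/\ src a \in mdd_nodes M, dst a \in mdd_nodes M,
             mdd_layer M (dst a) = (mdd_layer M (src a)).+1 &
             lab a \in D (mdd_layer M (src a))])].

Definition SolM (M : mdd) (x : seq L) : Prop :=
  exists p, is_path (mdd_arcs M) (mdd_root M) (mdd_term M) p /\ x = map lab p.

Definition feasible_set (n : nat) (D : nat -> pred L) (feas : seq L -> Prop) :=
  forall x, feas x -> size x = n /\ (forall i (d : L), i < n -> nth d x i \in D i.+1).


End MDD.

Section Exact.
Variables (L W : eqType) (M : mdd L W).

Definition SomeDown (v : nat) (l : L) : Prop :=
  exists p, is_path (mdd_arcs M) (mdd_root M) v p /\ l \in map (@lab L W) p.
Definition AllDown (v : nat) (l : L) : Prop :=
  forall p, is_path (mdd_arcs M) (mdd_root M) v p -> l \in map (@lab L W) p.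

Inductive exact : nat -> Prop :=
  exact_intro v :
    (forall l, SomeDown v l <-> AllDown v l) ->
    (forall a, a \in mdd_arcs M -> dst a = v -> exact (src a)) ->
    exact v.
End Exact.

Section Peel.
Variables (L W : eqType).
Variable feas : seq L -> Prop.
Variable M : mdd L W.
Variable u : nat.

Local Notation arc := (arc L W).
Local Notation r := (mdd_root M).
Local Notation t := (mdd_term M).

(* State of the peel operation: all current arcs (of M and of u-bar together),
   layer function, nodes of M, nodes of u-bar, and the terminal t' of u-bar
   (the copy of t, once it has been created). *)
Record pstate := PState {
  ps_arcs : seq arc;
  ps_layer : nat -> nat;
  ps_M : seq nat;
  ps_U : seq nat;
  ps_tp : option nat }.

Definition peel_init : pstate :=
  PState [seq a <- mdd_arcs M | dst a != u] (mdd_layer M)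
         [seq v <- mdd_nodes M | v != u] [:: u]
         (if u == t then Some u else None).

(* Filter condition: arc a may be removed from the current arcs G only if no
   feasible solution of P corresponds to a path using a, i.e. neither an r-t path
   of the current diagram through a, nor (a r-u path of the original M
   followed by) a path of the current diagram from u to the terminal t or t'
   through a. *)
Definition removable (G : seq arc) (tp : option nat) (a : arc) : Prop :=
  ~ exists x, feas x /\
     ((exists p, is_path G r t p /\ a \in p /\ x = map (@lab L W) p) \/
      (exists p q w, is_path (mdd_arcs M) r u p /\ is_path G u w q /\
         (w = t \/ tp = Some w) /\ a \in q /\
         x = map (@lab L W) p ++ map (@lab L W) q)).

(* Processing one node m of M with in-arcs from u-bar, creating the fresh node m'. *)
Definition split_node (st : pstate) (m m' : nat) (st' : pstate) : Prop :=
  let G0 := [seq if (dst a == m) && (src a \in ps_U st) then set_dst a m' else a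
            | a <- ps_arcs st]
            ++ [seq set_src a m' | a <- ps_arcs st & src a == m] in
  let tp' := if m == t then Some m' else ps_tp st in
  [/\ m \in ps_M st,
      m' \notin ps_M st, m' \notin ps_U st,
      (forall a, a \in ps_arcs st -> src a != m' /\ dst a != m') &
      exists bm : bitseq,
        [/\ size bm = size G0,
            (forall i (d : arc), i < size G0 -> ~~ nth false bm i ->
               let a := nth d G0 i in
               [|| dst a == m', src a == m | src a == m'] /\ removable G0 tp' a) &
            st' = PState (mask bm G0)
                    (fun x => if x == m' then ps_layer st m else ps_layer st x)
                    (ps_M st) (m' :: ps_U st) tp']].

Inductive split_seq : pstate -> seq nat -> pstate -> Prop :=
| split_nil st : split_seq st [::] st
| split_cons st m s st1 st2 :
    (exists m', split_node st m m' st1) -> split_seq st1 s st2 ->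
    split_seq st (m :: s) st2.

Definition has_in_from_U (st : pstate) (m : nat) : bool :=
  (m \in ps_M st) && has (fun a => (src a \in ps_U st) && (dst a == m)) (ps_arcs st).

(* one iteration of the while loop: all such nodes m are processed (in some order) *)
Definition peel_iter (st st' : pstate) : Prop :=
  exists s : seq nat,
    [/\ uniq s, s != [::], (forall m, (m \in s) = has_in_from_U st m) &
        split_seq st s st'].

Definition cross_arc (st : pstate) : bool :=
  has (fun a => (src a \in ps_U st) && (dst a \in ps_M st)) (ps_arcs st).

Inductive peel_loop : pstate -> pstate -> Prop :=
| loop_done st : ~~ cross_arc st -> peel_loop st st
| loop_step st st1 st2 : cross_arc st -> peel_iter st st1 -> peel_loop st1 st2 ->
    peel_loop st st2.

Definition trimmable (st : pstate) (v : nat) : bool :=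
  [&& v \in ps_M st, v != r, v != t &
      ~~ has (fun a => dst a == v) (ps_arcs st) || ~~ has (fun a => src a == v) (ps_arcs st)].

Definition trim_node (st : pstate) (v : nat) : pstate :=
  PState [seq a <- ps_arcs st | (src a != v) && (dst a != v)] (ps_layer st)
         [seq w <- ps_M st | w != v] (ps_U st) (ps_tp st).

Inductive trim_loop : pstate -> pstate -> Prop :=
| trim_done st : (forall v, ~~ trimmable st v) -> trim_loop st st
| trim_step st v st2 : trimmable st v -> trim_loop (trim_node st v) st2 ->
    trim_loop st st2.

Definition peel_run (st : pstate) : Prop :=
  exists st1, peel_loop peel_init st1 /\ trim_loop st1 st.

Definition Mstar_arcs (st : pstate) : seq arc :=
  [seq a <- ps_arcs st | (src a \in ps_M st) && (dst a \in ps_M st)].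
Definition Ubar_arcs (st : pstate) : seq arc :=
  [seq a <- ps_arcs st | (src a \in ps_U st) && (dst a \in ps_U st)].

Definition SolMstar (st : pstate) (x : seq L) : Prop :=
  exists p, is_path (Mstar_arcs st) r t p /\ x = map (@lab L W) p.

Definition SolUbar (st : pstate) (x : seq L) : Prop :=
  exists tp, ps_tp st = Some tp /\
  exists p q, is_path (mdd_arcs M) r u p /\ is_path (Ubar_arcs st) u tp q /\
     x = map (@lab L W) p ++ map (@lab L W) q.

End Peel.

From Pilot Require Import Defs.
From mathcomp Require Import all_boot.
Set Implicit Arguments. Unset Strict Implicit. Unset Printing Implicit Defensive.

(* The proof is an invariant argument over the run of the peel operation.
   The state keeps M and u-bar in one arc list; besides a structural
   invariant ([peel_wf]) we maintain that every feasible solution is read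
   either along an r-t path inside M, or along an r-u path of the original
   diagram followed by a path from u to t or to the copy t' ([covers]).
   Splitting a node m transports such paths (in-arcs from u-bar are redirected
   to m', and the rest of the path continues through the copies of the
   out-arcs of m), and the filter never removes an arc of a witness path.
   A layer invariant ([layer_inv]) guarantees that t is copied at most once,
   so that the terminal t' never changes once it exists.  When the loop stops
   no arc leaves u-bar, so the second kind of witness path lies in u-bar and
   ends at t'; the final trimming deletes only nodes that no r-t path visits. *)

Lemma mem_mask_keep (T : eqType) (P : T -> Prop) (bm : bitseq) (s : seq T) x :
  size bm = size s ->
  (forall i d, i < size s -> ~~ nth false bm i -> P (nth d s i)) ->
  x \in s -> ~ P x -> x \in mask bm s.
Proof.
move=> Hsz Hdrop Hx HPx; have Hi : index x s < size s by rewrite index_mem.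
case Hb: (nth false bm (index x s)); last first.
  by case: HPx; move: (Hdrop _ x Hi (negbT Hb)); rewrite nth_index.
suff: nth x s (index x s) \in mask bm s by rewrite nth_index.
elim: s bm (index x s) Hsz Hi Hb {Hx Hdrop HPx} => [|y s IH] [|b bm] [|i] //= [Hsz] Hi Hb.
  by rewrite Hb mem_head.
by case: b; rewrite /= ?in_cons (IH _ _ Hsz Hi Hb) ?orbT.
Qed.

Section Paths.
Variables (L W : eqType).
Local Notation arc := (Defs.arc L W).

Lemma path_sub (G G' : seq arc) x y p :
  is_path G x y p -> {subset p <= G'} -> is_path G' x y p.
Proof.
elim: p x => [|a p IH] x //= /and3P[_ -> Hp] Hsub.
rewrite Hsub ?mem_head //=; apply: (IH _ Hp) => b Hb.
by apply: Hsub; rewrite in_cons Hb orbT.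
Qed.

Lemma path_mem (G : seq arc) x y p : is_path G x y p -> {subset p <= G}.
Proof.
elim: p x => [|b p IH] x //= /and3P[Hb _ Hp] a.
by rewrite in_cons => /orP[/eqP->//|/(IH _ Hp)].
Qed.

Lemma path_split_at (G : seq arc) (v : nat) x y p : is_path G x y p ->
  (x != v /\ forall a, a \in p -> (src a != v) && (dst a != v)) \/
  exists p1 p2, [/\ p = p1 ++ p2, is_path G x v p1, is_path G v y p2 &
      forall a, a \in p2 -> dst a != v].
Proof.
elim: p x => [|a p IH] x /=.
  move/eqP=> ->; case: (eqVneq y v) => [->|Hyv]; last by left.
  by right; exists [::], [::]; split => //=; rewrite eqxx.
case/and3P=> Ha /eqP Hs Hp; case: (IH _ Hp) => [[Hd Hall]|[p1 [p2 [-> H1 H2 H3]]]].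
  case: (eqVneq x v) => [Hxv|Hxv].
    right; exists [::], (a :: p); split => //=; first by rewrite Hxv.
      by rewrite Ha Hs Hxv eqxx.
    by move=> b; rewrite in_cons => /orP[/eqP->//|/Hall /andP[]].
  left; split => // b; rewrite in_cons => /orP[/eqP->|/Hall//].
  by rewrite Hs Hxv.
by right; exists (a :: p1), p2; split => //=; rewrite Ha Hs eqxx.
Qed.

Lemma path_avoid (G : seq arc) x y p v : is_path G x y p -> v != x -> v != y ->
  ~~ has (fun a => dst a == v) G || ~~ has (fun a => src a == v) G ->
  forall a, a \in p -> (src a != v) && (dst a != v).
Proof.
move=> + + Hvy Hno; elim: p x => [|a p IH] x //= /and3P[Ha /eqP Hs Hp] Hvx.
have Hdv : dst a != v.
  apply: contraTneq Hno => Hd; rewrite negb_or !negbK.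
  case: p Hp {IH} => [/eqP Hy|b p /= /and3P[Hb /eqP Hbs _]].
    by rewrite -Hy Hd eqxx in Hvy.
  by apply/andP; split; apply/hasP; [exists a | exists b]; rewrite ?Hbs ?Hd.
move=> b; rewrite in_cons => /orP[/eqP->|]; first by rewrite Hs eq_sym Hvx Hdv.
by apply: (IH _ Hp); rewrite eq_sym.
Qed.

End Paths.

Section PeelInvariants.
Variables (L W : eqType) (n : nat) (D : nat -> pred L) (feas : seq L -> Prop)
  (M : mdd L W) (u : nat).
Hypothesis wfM : wf_mdd n D M.
Hypothesis u_node : u \in mdd_nodes M.
Local Notation arc := (Defs.arc L W).
Local Notation r := (mdd_root M).
Local Notation t := (mdd_term M).
Local Notation labs := (map (@lab L W)).

Definition M0 : seq nat := [seq v <- mdd_nodes M | v != u].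

Lemma M0_neq v : v \in M0 -> v != u.
Proof. by rewrite mem_filter => /andP[]. Qed.

Lemma t_node : t \in mdd_nodes M.
Proof. by case: wfM => [[]]. Qed.

Lemma t_layer : mdd_layer M t = n.+1.
Proof. by case: wfM => [[]]. Qed.

Lemma node_layer v : v \in mdd_nodes M -> 1 <= mdd_layer M v <= n.+1.
Proof. by case: wfM => _ [H _ _ _] /H. Qed.

Lemma arc_wf a : a \in mdd_arcs M ->
  [/\ src a \in mdd_nodes M, dst a \in mdd_nodes M &
      mdd_layer M (dst a) = (mdd_layer M (src a)).+1].
Proof. by case: wfM => _ [_ _ _ H] /H []. Qed.

Definition redirect (st : pstate L W) (m m' : nat) (a : arc) : arc :=
  if (dst a == m) && (src a \in ps_U st) then set_dst a m' else a.

Definition split_arcs (st : pstate L W) (m m' : nat) : seq arc :=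
  [seq redirect st m m' a | a <- ps_arcs st] ++
  [seq set_src a m' | a <- ps_arcs st & src a == m].

Lemma split_arcs_keep st m m' a : a \in ps_arcs st ->
  ~~ ((dst a == m) && (src a \in ps_U st)) -> a \in split_arcs st m m'.
Proof.
move=> Ha Hn; rewrite mem_cat; apply/orP; left; apply/mapP; exists a => //.
by rewrite /redirect (negbTE Hn).
Qed.

Lemma split_arcs_redirect st m m' a : a \in ps_arcs st -> dst a = m ->
  src a \in ps_U st -> set_dst a m' \in split_arcs st m m'.
Proof.
move=> Ha Hd Hs; rewrite mem_cat; apply/orP; left; apply/mapP; exists a => //.
by rewrite /redirect Hd eqxx Hs.
Qed.

Lemma split_arcs_copy st m m' a : a \in ps_arcs st -> src a = m ->
  set_src a m' \in split_arcs st m m'.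
Proof.
move=> Ha Hs; rewrite mem_cat; apply/orP; right; apply/mapP; exists a => //.
by rewrite mem_filter Hs eqxx.
Qed.

Lemma split_arcsP st m m' b : b \in split_arcs st m m' ->
  (exists2 a, a \in ps_arcs st &
     [/\ b = set_dst a m', dst a = m & src a \in ps_U st]) \/
  (exists2 a, a \in ps_arcs st &
     b = a /\ ~~ ((dst a == m) && (src a \in ps_U st))) \/
  (exists2 a, a \in ps_arcs st & b = set_src a m' /\ src a = m).
Proof.
rewrite mem_cat => /orP[/mapP[a Ha ->]|/mapP[a]].
  rewrite /redirect; case: ifP => [/andP[/eqP Hd Hs]|/negbT Hn].
    by left; exists a.
  by right; left; exists a.
by rewrite mem_filter => /andP[/eqP Hs Ha] ->; right; right; exists a.
Qed.

Record peel_wf (st : pstate L W) : Prop := {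
  wf_M : ps_M st = M0;
  wf_uU : u \in ps_U st;
  wf_disj : forall v, v \in ps_U st -> v \notin ps_M st;
  wf_ends : forall a, a \in ps_arcs st ->
     ((src a \in ps_M st) || (src a \in ps_U st)) &&
     ((dst a \in ps_M st) || (dst a \in ps_U st));
  wf_intoU : forall a, a \in ps_arcs st -> dst a \in ps_U st -> src a \in ps_U st;
  wf_layer : forall a, a \in ps_arcs st ->
     ps_layer st (dst a) = (ps_layer st (src a)).+1;
  wf_layerM : forall v, v \in ps_M st -> ps_layer st v = mdd_layer M v;
  wf_ut : u = t -> ps_tp st = Some u;
  wf_tp : forall w, ps_tp st = Some w -> w \in ps_U st }.

(* A path starting in M stays in M, so splitting leaves it untouched. *)
Lemma split_path_M st m m' q y w : peel_wf st -> y \in ps_M st ->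
  is_path (ps_arcs st) y w q -> is_path (split_arcs st m m') y w q.
Proof.
move=> S; elim: q y => [|a q IH] y //= Hy /and3P[Ha /eqP Hs Hp].
have HsU : src a \notin ps_U st by apply/negP => /(wf_disj S); rewrite Hs Hy.
rewrite split_arcs_keep //=; last by rewrite (negbTE HsU) andbF.
rewrite Hs eqxx /=; apply: IH Hp.
by case/andP: (wf_ends S Ha) => _ /orP[//|/(wf_intoU S Ha)]; rewrite (negbTE HsU).
Qed.

Lemma split_path_U st m m' q y w : peel_wf st -> m \in ps_M st ->
  y \in ps_U st -> is_path (ps_arcs st) y w q ->
  exists q' w', [/\ is_path (split_arcs st m m') y w' q', labs q' = labs q &
                    w' = w \/ (w = m /\ w' = m')].
Proof.
move=> S Hm; elim: q y => [|a q IH] y Hy /=.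
  by move/eqP => ->; exists [::], w; split => //=; left.
case/and3P=> Ha /eqP Hs Hp; have HsU : src a \in ps_U st by rewrite Hs.
case/andP: (wf_ends S Ha) => _ /orP[HdM|HdU].
- case: (eqVneq (dst a) m) => [Hdm|Hdm]; last first.
    exists (a :: q), w; split => //; last by left.
    rewrite /= split_arcs_keep ?(negbTE Hdm) //= Hs eqxx /=.
    exact (split_path_M m m' S HdM Hp).
  have Hredir := split_arcs_redirect m' Ha Hdm HsU.
  case: q Hp {IH} => [|b q] /= Hp.
    exists [:: set_dst a m'], m'; split => //=; first by rewrite Hredir -Hs !eqxx.
    by right; rewrite -Hdm (eqP Hp).
  case/and3P: Hp => Hb /eqP Hbs Hq; rewrite Hdm in Hbs.
  exists [:: set_dst a m', set_src b m' & q], w; split => //; last by left.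
  rewrite /= Hredir (split_arcs_copy m' Hb Hbs) -Hs !eqxx /=.
  apply: (split_path_M m m' S _ Hq).
  case/andP: (wf_ends S Hb) => _ /orP[//|/(wf_intoU S Hb)].
  by rewrite Hbs => /(wf_disj S); rewrite Hm.
- have Hdm : dst a != m.
    by apply: contraTneq Hm => <-; exact (wf_disj S HdU).
  have [q' [w' [Hq' Hl Hw]]] := IH _ HdU Hp.
  exists (a :: q'), w'; split => //=; last by rewrite Hl.
  by rewrite split_arcs_keep ?(negbTE Hdm) //= Hs eqxx.
Qed.

Definition inside_M (st : pstate L W) (p : seq arc) : bool :=
  all (fun a => (src a \in ps_M st) && (dst a \in ps_M st)) p.

Definition covers (st : pstate L W) : Prop := forall x, feas x ->
  (exists p, [/\ is_path (ps_arcs st) r t p, inside_M st p & x = labs p]) \/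
  (exists p q w, [/\ is_path (mdd_arcs M) r u p, is_path (ps_arcs st) u w q,
      w = t \/ ps_tp st = Some w & x = labs p ++ labs q]).

(* Layer invariant inside an iteration of the peel loop that processes the
   nodes [s] of layer l.+1: an arc from u-bar into M either starts on layer l
   and ends in [s], or starts on layer l.+1; and once t' exists (with t <> u)
   the loop has reached the last layer and t is no longer to be split. *)
Definition layer_inv (st : pstate L W) (l : nat) (s : seq nat) : Prop :=
  [/\ forall a, a \in ps_arcs st -> src a \in ps_U st -> dst a \in ps_M st ->
        (ps_layer st (src a) = l /\ dst a \in s) \/ ps_layer st (src a) = l.+1,
      forall m, m \in s -> m \in ps_M st /\ ps_layer st m = l.+1,
      uniq s &
      forall w, ps_tp st = Some w -> t <> u -> l.+1 = n.+1 /\ t \notin s].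

Lemma split_wf st m m' st' : peel_wf st -> split_node feas M u st m m' st' ->
  peel_wf st'.
Proof.
move=> S [Hm Hm'M _ Hfresh [bm [_ _ ->]]]; rewrite -/(split_arcs st m m').
have Hsm' a : a \in ps_arcs st -> src a != m' by case/Hfresh.
have Hdm' a : a \in ps_arcs st -> dst a != m' by case/Hfresh.
have HvM v : v \in ps_M st -> v != m' by apply: contraTneq => ->.
have Hmu : m != u by apply: M0_neq; rewrite -(wf_M S).
constructor => /=.
- exact: wf_M S.
- by rewrite in_cons (wf_uU S) orbT.
- by move=> v; rewrite in_cons => /orP[/eqP->//|/(wf_disj S)].
- move=> b /mem_mask/split_arcsP[[a Ha [-> Hd Hs]]|[[a Ha [-> _]]|[a Ha [-> Hs]]]].
  + by rewrite !in_cons eqxx Hs !orbT.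
  + move: (wf_ends S Ha); rewrite !in_cons.
    by case/andP => /orP[->|->] /orP[->|->]; rewrite ?orbT.
  + rewrite !in_cons eqxx /=.
    by case/andP: (wf_ends S Ha) => _ /orP[->|->]; rewrite ?orbT.
- move=> b /mem_mask/split_arcsP[[a Ha [-> Hd Hs]]|[[a Ha [-> _]]|[a Ha [-> Hs]]]].
  + by rewrite !in_cons Hs orbT.
  + rewrite !in_cons (negbTE (Hdm' _ Ha)) /= => Hd.
    by rewrite (wf_intoU S Ha Hd) orbT.
  + by rewrite !in_cons eqxx.
- move=> b /mem_mask/split_arcsP[[a Ha [-> Hd Hs]]|[[a Ha [-> _]]|[a Ha [-> Hs]]]].
  + by rewrite /= eqxx (negbTE (Hsm' _ Ha)) -Hd (wf_layer S Ha).
  + by rewrite (negbTE (Hsm' _ Ha)) (negbTE (Hdm' _ Ha)) (wf_layer S Ha).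
  + by rewrite /= eqxx (negbTE (Hdm' _ Ha)) -Hs (wf_layer S Ha).
- by move=> v Hv; rewrite (negbTE (HvM _ Hv)) (wf_layerM S).
- move=> Hut; case: eqP => [Hmt|_]; last exact: wf_ut S Hut.
  by move: Hmu; rewrite Hmt -Hut eqxx.
- move=> w; case: eqP => _; first by case=> <-; rewrite mem_head.
  by move=> Hw; rewrite in_cons (wf_tp S Hw) orbT.
Qed.

Lemma split_layer st l m s m' st' : peel_wf st -> layer_inv st l (m :: s) ->
  split_node feas M u st m m' st' -> layer_inv st' l s.
Proof.
move=> S [Lc Ls Lu Lt] [Hm Hm'M _ Hfresh [bm [_ _ ->]]].
rewrite -/(split_arcs st m m').
have Hsm' a : a \in ps_arcs st -> src a != m' by case/Hfresh.
have HvM v : v \in ps_M st -> v != m' by apply: contraTneq => ->.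
have [_ Hml] := Ls m (mem_head _ _).
split => /=.
- move=> b /mem_mask/split_arcsP[[a Ha [-> Hd Hs]]|[[a Ha [-> Hn]]|[a Ha [-> Hs]]]].
  + by move=> _ /HvM; rewrite eqxx.
  + rewrite (negbTE (Hsm' _ Ha)) in_cons => /orP[/eqP Hs|HsU] HdM.
      by move: (Hsm' _ Ha); rewrite Hs eqxx.
    case: (Lc _ Ha HsU HdM) => [[Hl]|->]; last by right.
    rewrite in_cons => /orP[/eqP Hd|Hd]; last by left.
    by move: Hn; rewrite Hd eqxx HsU.
  + by move=> _ _; rewrite /= eqxx; right.
- move=> m0 Hm0; have [Hm0M Hl] : m0 \in ps_M st /\ ps_layer st m0 = l.+1.
    by apply: Ls; rewrite in_cons Hm0 orbT.
  by rewrite (negbTE (HvM _ Hm0M)).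
- by move: Lu; rewrite cons_uniq => /andP[].
- move=> w; case: eqP => [Hmt|_] Hw Htu.
    split; last by move: Lu; rewrite cons_uniq -Hmt => /andP[].
    by rewrite -Hml (wf_layerM S Hm) Hmt t_layer.
  by case: (Lt _ Hw Htu) => ->; rewrite in_cons negb_or => /andP[].
Qed.

(* Splitting preserves coverage: paths inside M are untouched, paths from u
   are transformed by [split_path_U], and the filter only drops arcs that lie
   on no such witness path. *)
Lemma split_covers st l m s m' st' : peel_wf st -> covers st ->
  layer_inv st l (m :: s) -> split_node feas M u st m m' st' -> covers st'.
Proof.
move=> S Wi [_ _ _ Lt] [Hm _ _ _ [bm [Hsz Hdrop ->]]].
rewrite -/(split_arcs st m m') in Hsz Hdrop *.
set tp' := (if m == t then Some m' else ps_tp st).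
have keep a : a \in split_arcs st m m' ->
    ~ removable feas M u (split_arcs st m m') tp' a -> a \in mask bm (split_arcs st m m').
  by apply: mem_mask_keep Hsz _ => i d Hi Hb; case: (Hdrop i d Hi Hb).
have Hmu : m != u by apply: M0_neq; rewrite -(wf_M S).
have HmU : m \notin ps_U st by apply/negP => /(wf_disj S)/negP/(_ Hm).
move=> x Hx; case: (Wi x Hx) => [[p [Hp HpM Hxe]]|[p [q [w [Hp Hq Hw Hxe]]]]].
- have Hp' : is_path (split_arcs st m m') r t p.
    apply: (path_sub Hp) => a Ha; apply: split_arcs_keep; first exact: path_mem Hp _ Ha.
    case/andP: (allP HpM a Ha) => HsM _; rewrite andbC.
    by apply/negP => /andP[/(wf_disj S)/negP/(_ HsM)].
  left; exists p; split => //=; apply: (path_sub Hp') => a Ha.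
  apply: keep; first exact: path_mem Hp' _ Ha.
  by apply; exists x; split => //; left; exists p.
- have [q' [w' [Hq' Hl Hw']]] := split_path_U m' S Hm (wf_uU S) Hq.
  have Hw'' : w' = t \/ tp' = Some w'.
    case: Hw' => [->|[Hwm ->]]; last first.
      case: Hw => [Hwt|Htp]; first by right; rewrite /tp' -Hwm Hwt eqxx.
      by move: (wf_tp S Htp); rewrite Hwm (negbTE HmU).
    case: Hw => [->|Htp]; first by left.
    right; rewrite /tp'; case: eqP => // Hmt.
    have Htu : t <> u by move=> Htu; move: Hmu; rewrite Hmt Htu eqxx.
    by case: (Lt _ Htp Htu) => _; rewrite -Hmt mem_head.
  right; exists p, q', w'; split => //; last by rewrite Hxe Hl.
  apply: (path_sub Hq') => a Ha; apply: keep; first exact: path_mem Hq' _ Ha.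
  by apply; exists x; split => //; right; exists p, q', w'; rewrite Hxe Hl.
Qed.

Lemma split_seq_pres st s st' l : split_seq feas M u st s st' ->
  peel_wf st -> covers st -> layer_inv st l s ->
  [/\ peel_wf st', covers st' & layer_inv st' l [::]].
Proof.
elim=> [//|st0 m s0 st1 st2 [m' Hsplit] _ IH] S Wi Li.
exact: IH (split_wf S Hsplit) (split_covers S Wi Li Hsplit) (split_layer S Li Hsplit).
Qed.

(* One iteration of the loop splits exactly the targets of the arcs leaving
   u-bar, which all lie on the next layer; it moves the frontier one layer on. *)
Lemma iter_pres st st' l : peel_wf st -> covers st -> layer_inv st l [::] ->
  peel_iter feas M u st st' ->
  [/\ peel_wf st', covers st' & layer_inv st' l.+1 [::]].
Proof.
move=> S Wi [Lc _ _ Lt] [s [Hu Hne Hs Hseq]].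
have Lc' a : a \in ps_arcs st -> src a \in ps_U st -> dst a \in ps_M st ->
    ps_layer st (src a) = l.+1.
  by move=> Ha HsU HdM; case: (Lc _ Ha HsU HdM) => // [[_]].
have Hsm m : m \in s -> m \in ps_M st /\ ps_layer st m = l.+2.
  rewrite Hs => /andP[HmM /hasP[a Ha /andP[HsU /eqP Hd]]].
  by split => //; rewrite -Hd (wf_layer S Ha) (Lc' _ Ha HsU) // Hd.
apply: (split_seq_pres Hseq S Wi); split => //.
- move=> a Ha HsU HdM; left; split; first exact: Lc'.
  by rewrite Hs /has_in_from_U HdM; apply/hasP; exists a; rewrite ?HsU ?eqxx.
- move=> w Hw Htu; exfalso; case: s Hne Hsm {Hs Hseq Hu} => [//|m s] _ Hsm.
  have [HmM Hml] := Hsm m (mem_head _ _).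
  have HmN : m \in mdd_nodes M by move: HmM; rewrite (wf_M S) mem_filter => /andP[].
  have /andP[_] := node_layer HmN.
  by rewrite -(wf_layerM S HmM) Hml (Lt _ Hw Htu).1 ltnn.
Qed.

Lemma loop_pres st st' l : peel_loop feas M u st st' ->
  peel_wf st -> covers st -> layer_inv st l [::] ->
  [/\ peel_wf st', covers st' & ~~ cross_arc st'].
Proof.
move=> H; elim: H l => [st0 Hc|st0 st1 st2 _ Hit _ IH] l S Wi Li //.
by case: (iter_pres S Wi Li Hit) => S1 W1 L1; exact: IH L1.
Qed.

Lemma init_wf : peel_wf (peel_init M u).
Proof.
have HM0 v : v \in mdd_nodes M -> v != u -> v \in M0 by rewrite mem_filter => ->->.
constructor => //=.
- by rewrite mem_head.
- by move=> v; rewrite in_cons orbF => /eqP ->; rewrite mem_filter eqxx.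
- move=> a; rewrite mem_filter => /andP[Hdu Ha]; case: (arc_wf Ha) => Hs Hd _.
  rewrite (HM0 _ Hd Hdu) /= andbT in_cons orbF.
  by case: (eqVneq (src a) u) => [->|Hsu]; rewrite ?eqxx ?orbT // HM0.
- by move=> a; rewrite mem_filter in_cons orbF => /andP[/negbTE->].
- by move=> a; rewrite mem_filter => /andP[_ /arc_wf[]].
- by move=> <-; rewrite eqxx.
- by move=> w; case: ifP => // _ [<-]; rewrite mem_head.
Qed.

(* Initially coverage is relaxedness of M, split at the last visit of u. *)
Lemma init_covers : (forall x, feas x -> SolM M x) -> covers (peel_init M u).
Proof.
move=> Hsol x Hx; have [p [Hp Hxe]] := Hsol x Hx.
have HM0 v : v \in mdd_nodes M -> v != u -> v \in M0 by rewrite mem_filter => ->->.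
case: (path_split_at u Hp) => [[_ Hall]|[p1 [p2 [Hpe H1 H2 H3]]]].
- left; exists p; split => //.
    apply: (path_sub Hp) => a Ha; rewrite /= mem_filter (path_mem Hp Ha) andbT.
    by case/andP: (Hall a Ha).
  apply/allP => a Ha /=; case/andP: (Hall a Ha) => Hsu Hdu.
  by case: (arc_wf (path_mem Hp Ha)) => Hs Hd _; rewrite !HM0.
- right; exists p1, p2, t; split=> //; [|by left|by rewrite Hxe Hpe map_cat].
  apply: (path_sub H2) => a Ha; rewrite /= mem_filter H3 //=.
  by apply: (path_mem Hp); rewrite Hpe mem_cat Ha orbT.
Qed.

(* Initially u is the only node of u-bar, so every arc leaving u-bar starts
   on the layer of u. *)
Lemma init_layer : layer_inv (peel_init M u) (mdd_layer M u).-1 [::].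
Proof.
have /andP[Hu1 _] := node_layer u_node.
split => //=.
- by move=> a _; rewrite in_cons orbF => /eqP ->; rewrite prednK //; right.
- by move=> w; case: eqP => // <-.
Qed.

Definition inside_U (st : pstate L W) (q : seq arc) : bool :=
  all (fun a => (src a \in ps_U st) && (dst a \in ps_U st)) q.

Definition final_covers (st : pstate L W) : Prop :=
  (forall v, v \in ps_U st -> v \notin ps_M st) /\
  forall x, feas x ->
  (exists p, [/\ is_path (ps_arcs st) r t p, inside_M st p & x = labs p]) \/
  (exists p q w, [/\ is_path (mdd_arcs M) r u p, is_path (ps_arcs st) u w q,
      inside_U st q, ps_tp st = Some w & x = labs p ++ labs q]).

Lemma path_stays_in_U st q y w : peel_wf st -> ~~ cross_arc st -> y \in ps_U st ->
  is_path (ps_arcs st) y w q -> inside_U st q && (w \in ps_U st).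
Proof.
move=> S Hc; elim: q y => [|a q IH] y Hy /=; first by move/eqP <-.
case/and3P => Ha /eqP Hs Hp; rewrite Hs Hy /=.
have HdU : dst a \in ps_U st.
  case/andP: (wf_ends S Ha) => _ /orP[HdM|//]; case/hasP: Hc.
  by exists a; rewrite // Hs Hy HdM.
by rewrite HdU; exact: IH Hp.
Qed.

(* When the loop stops, a witness path from u ends in u-bar, hence at t'. *)
Lemma loop_final st : peel_wf st -> covers st -> ~~ cross_arc st -> final_covers st.
Proof.
move=> S Wi Hc; split; first exact: wf_disj S.
move=> x Hx; case: (Wi x Hx) => [HA|[p [q [w [Hp Hq Hw Hxe]]]]]; first by left.
right; exists p, q, w; case/andP: (path_stays_in_U S Hc (wf_uU S) Hq) => Hall HwU.
split => //; case: Hw => // Hwt.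
have Htu : t = u.
  apply/eqP; apply: contraTT (wf_disj S HwU) => Htu.
  by rewrite negbK (wf_M S) mem_filter Hwt t_node Htu.
by rewrite (wf_ut S (esym Htu)) Hwt Htu.
Qed.

(* Deleting a node of M other than r and t that lacks in-arcs or out-arcs
   destroys no witness path. *)
Lemma trim_pres st st' : trim_loop M st st' -> final_covers st -> final_covers st'.
Proof.
elim=> // st0 v st1 /and4P[HvM Hvr Hvt Hno] _ IH [Fd Fw]; apply: IH; split => /=.
  by move=> w /Fd; rewrite mem_filter negb_and => ->; rewrite orbT.
move=> x Hx; case: (Fw x Hx) => [[p [Hp HpM Hxe]]|[p [q [w [Hp Hq Hall Htp Hxe]]]]].
- have Hav := path_avoid Hp Hvr Hvt Hno.
  left; exists p; split => //.
    by apply: (path_sub Hp) => a Ha; rewrite mem_filter Hav // (path_mem Hp Ha).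
  apply/allP => a Ha /=; rewrite !mem_filter.
  by case/andP: (Hav a Ha) => -> ->; exact: (allP HpM).
- right; exists p, q, w; split => //.
  apply: (path_sub Hq) => a Ha; rewrite mem_filter (path_mem Hq Ha) andbT.
  case/andP: (allP Hall a Ha) => /Fd Hs /Fd Hd.
  by apply/andP; split; [move: Hs | move: Hd]; apply: contraNneq => ->.
Qed.

Lemma final_covers_sol st : final_covers st ->
  forall x, feas x -> SolMstar M st x \/ SolUbar M u st x.
Proof.
move=> [_ Fw] x /Fw [[p [Hp HpM Hxe]]|[p [q [w [Hp Hq Hall Htp Hxe]]]]].
- left; exists p; split => //; apply: (path_sub Hp) => a Ha.
  by rewrite mem_filter (path_mem Hp Ha) andbT; exact: (allP HpM).
- right; exists w; split => //; exists p, q; split => //; split => //.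
  apply: (path_sub Hq) => a Ha.
  by rewrite mem_filter (path_mem Hq Ha) andbT; exact: (allP Hall).
Qed.

End PeelInvariants.

Theorem mainTheorem1 (L W : eqType) (n : nat) (D : nat -> pred L)
    (feas : seq L -> Prop) (M : mdd L W) (u : nat) (st : pstate L W) :
  feasible_set n D feas ->
  wf_mdd n D M ->
  (forall x, feas x -> SolM M x) ->
  u \in mdd_nodes M ->
  exact M u ->
  peel_run feas M u st ->
  forall x, feas x -> SolMstar M st x \/ SolUbar M u st x.
Proof.
move=> _ wfM relaxed u_node _ [st1 [Hloop Htrim]].
have [wf1 cov1 stop1] := loop_pres wfM Hloop (init_wf u wfM)
  (init_covers u wfM relaxed) (init_layer wfM u_node).
exact: final_covers_sol (trim_pres Htrim (loop_final wfM wf1 cov1 stop1)).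
Qed.
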